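(* Let $n,m$ be positive integers and $t$ a nonnegative integer. Let $P$ be an induced path of a graph $G$ and let $x\in V(G)\setminus V(P)$ be such that $G\setminus V(P)\setminus x$ has $t$ components and $x$ has at least $(m+2)n^t$ neighbors in $P$. Then either $G$ has a $K_{2,n}$-minor, or $P$ has a subpath $P^*$ such that $x$ has exactly $m$ neighbors in $P^*$ and no vertex of $G\setminus V(P)$ other than $x$ has a neighbor in $P^*$.
   Context: Graphs are finite and simple; minors are simple minors. *)

From mathcomp Require Import all_boot.
Set Implicit Arguments. Unset Strict Implicit. Unset Printing Implicit Defensive.

Definition simple_graph (T : finType) (e : rel T) : Prop :=
  symmetric e /\ irreflexive e.

Definition induced (T : finType) (e : rel T) (A : {pred T}) : rel T :=
  [rel u v | [&& e u v, u \in A & v \in A]].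

Definition connected_set (T : finType) (e : rel T) (S : {set T}) : Prop :=
  S != set0 /\ {in S &, forall u v, connect (induced e (mem S)) u v}.

Definition induced_path (T : finType) (e : rel T) (P : seq T) : Prop :=
  [/\ P != [::], uniq P &
      forall (x0 : T) i j, i < size P -> j < size P ->
        e (nth x0 P i) (nth x0 P j)
        = ((i == j.+1) || (j == i.+1))].

Definition ncomp_outside (T : finType) (e : rel T) (P : seq T) (x : T) : nat :=
  let A := [pred y | (y \notin P) && (y != x)] in
  n_comp (induced e A) A.

Definition has_K2n_minor (T : finType) (e : rel T) (n : nat) : Prop :=
  exists (A1 A2 : {set T}) (B : 'I_n -> {set T}),
    [/\ connected_set e A1, connected_set e A2 &
        forall i, connected_set e (B i)] /\
    [/\ [disjoint A1 & A2],
        (forall i, [disjoint A1 & B i] /\ [disjoint A2 & B i]) &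
        (forall i j, i != j -> [disjoint B i & B j])] /\
    (forall i, (exists u v, [/\ u \in A1, v \in B i & e u v]) /\
               (exists u v, [/\ u \in A2, v \in B i & e u v])).

From mathcomp Require Import all_boot.
Set Implicit Arguments. Unset Strict Implicit. Unset Printing Implicit Defensive.

(* Induct on a set R of components of G \ V(P) \ x, for a subpath Q of P carrying
   at least m n^|R| neighbours of x and whose other outside neighbours all lie in
   components of R.  Cut Q into n consecutive blocks, each carrying m n^(|R|-1)
   neighbours of x.  If a component C of R touches every block, then {x}, C and the
   n blocks are the branch sets of a K_{2,n} minor; otherwise some block misses C
   and we recurse into it with C removed from R.  When R is empty, a prefix of Q
   with exactly m neighbours of x is the required subpath.  The bound m n^t
   already suffices. *)

Section SeqBlocks.
Variable T : eqType.

Lemma prefix_with_count (a : pred T) c s : c <= count a s ->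
  exists s1 s2, s = s1 ++ s2 /\ count a s1 = c.
Proof.
elim: s c => [|z s IHs] c /=.
  by rewrite leqn0 => /eqP->; exists [::], [::].
case: c => [|c] le_c; first by exists [::], (z :: s).
have /IHs[s1 [s2 [-> count_s1]]] : c.+1 - a z <= count a s.
  by case: (a z) le_c; rewrite ?subn1 ?subn0.
by exists (z :: s1), s2; rewrite /= count_s1; case: (a z); rewrite ?subn1 ?subn0.
Qed.

Lemma split_count_blocks (a : pred T) c k s : k * c <= count a s ->
  exists bs s', [/\ size bs = k, s = flatten bs ++ s' &
                   all (fun b => count a b == c) bs].
Proof.
elim: k s => [|k IHk] s; first by exists [::], s.
rewrite mulSn => le_kc.
have [b [s1 [def_s count_b]]] := prefix_with_count (leq_trans (leq_addr _ _) le_kc).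
subst s.
have /IHk[bs [s' [size_bs -> all_bs]]] : k * c <= count a s1.
  by move: le_kc; rewrite count_cat count_b leq_add2l.
by exists (b :: bs), s'; rewrite /= size_bs catA count_b eqxx.
Qed.

Lemma infix_flatten (bs : seq (seq T)) b : b \in bs -> infix b (flatten bs).
Proof.
elim: bs => [|b' bs IHbs] //=; rewrite inE => /predU1P[->|/IHbs].
  exact: prefix_infix.
exact: infix_catl.
Qed.

Lemma disjoint_nth_flatten (bs : seq (seq T)) i j :
  uniq (flatten bs) -> i < size bs -> j < size bs -> i != j ->
  {in nth [::] bs i, forall z, z \notin nth [::] bs j}.
Proof.
elim: bs i j => [|b bs IHbs] // i j /=.
rewrite cat_uniq => /and3P[_ /hasPn b_fl uniq_fl].
have mem_fl k z : k < size bs -> z \in nth [::] bs k -> z \in flatten bs.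
  by move=> lt_k z_k; apply/flattenP; exists (nth [::] bs k); rewrite ?mem_nth.
case: i j => [|i] [|j] //= lt_i lt_j ne_ij z.
- by move=> z_b; apply: contraL z_b => /mem_fl/b_fl; apply.
- by move=> /mem_fl/b_fl-/(_ lt_i).
- exact: IHbs.
Qed.

End SeqBlocks.

Section InducedSubgraphs.
Variables (T : finType) (e : rel T).

Lemma sub_connect_induced (A B : {pred T}) : {subset A <= B} ->
  subrel (connect (induced e A)) (connect (induced e B)).
Proof.
move=> sAB; apply: connect_sub => u v /and3P[euv uA vA].
by apply: connect1; rewrite /induced /= euv !sAB.
Qed.

Lemma eq_connect_induced (A B : {pred T}) : A =i B ->
  connect (induced e A) =2 connect (induced e B).
Proof. by move=> eqAB; apply: eq_connect => u v; rewrite /induced /= !eqAB. Qed.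

Lemma connect_induced_mem (A : {pred T}) u v :
  connect (induced e A) u v -> v = u \/ v \in A.
Proof.
case/connectP=> p; case/lastP: p => [|p z] path_p ->; first by left.
by move: path_p; rewrite rcons_path last_rcons => /andP[_ /and3P[_ _ ->]]; right.
Qed.

Lemma connect_induced_path a s :
  path e a s -> {in a :: s, forall w, connect (induced e (mem (a :: s))) a w}.
Proof.
elim: s a => [|b s IHs] a /=; first by move=> _ w /[!inE] /eqP->.
case/andP=> eab path_b w /[!inE] /predU1P[->//|w_bs].
have sub_bs : {subset b :: s <= a :: b :: s} by move=> z z_bs; rewrite inE z_bs orbT.
apply: connect_trans (sub_connect_induced sub_bs (IHs b path_b w w_bs)).
by apply: connect1; rewrite /induced /= eab !inE !eqxx orbT.
Qed.

Definition component (A : {pred T}) r : {set T} :=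
  [set y | (y \in A) && connect (induced e A) r y].

Lemma connect_component (A : {pred T}) r v :
  connect (induced e A) r v -> connect (induced e (mem (component A r))) r v.
Proof.
case/connectP=> p path_p ->.
elim/last_ind: p path_p => [|p z IHp]; first by rewrite connect0.
rewrite rcons_path last_rcons => /andP[path_p /and3P[e_pz p_A z_A]].
have r_p : connect (induced e A) r (last r p) by apply/connectP; exists p.
apply: connect_trans (IHp path_p) (connect1 _).
rewrite /induced /= !inE e_pz p_A z_A r_p /=.
by apply: connect_trans r_p (connect1 _); rewrite /induced /= e_pz p_A z_A.
Qed.

Lemma connected_set1 x : connected_set e [set x].
Proof.
split; first by apply/set0Pn; exists x; rewrite inE.
by move=> u v /set1P-> /set1P->.
Qed.

Hypothesis sym_e : symmetric e.

Lemma induced_sym (A : {pred T}) : symmetric (induced e A).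
Proof. by move=> u v; rewrite /induced /= sym_e (andbC (u \in A)). Qed.

Lemma connected_set_sorted s : s != [::] -> sorted e s ->
  connected_set e [set z | z \in s].
Proof.
case: s => // a s _ path_s.
split; first by apply/set0Pn; exists a; rewrite inE mem_head.
move=> u v; rewrite !in_set => u_s v_s.
rewrite (@eq_connect_induced _ (mem (a :: s))) => [|z]; last by rewrite in_set.
have head_u := connect_induced_path path_s u_s.
rewrite (sym_connect_sym (induced_sym _)) in head_u.
exact: connect_trans head_u (connect_induced_path path_s v_s).
Qed.

Lemma connected_set_component (A : {pred T}) r : r \in A ->
  connected_set e (component A r).
Proof.
move=> rA; split; first by apply/set0Pn; exists r; rewrite inE rA connect0.
have sym_C := sym_connect_sym (induced_sym (mem (component A r))).
move=> u v; rewrite !inE => /andP[_ /connect_component r_u] /andP[_ /connect_component].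
by apply: connect_trans; rewrite sym_C.
Qed.

Lemma component_representatives (A : {pred T}) :
  exists rs, [/\ size rs = n_comp (induced e A) A, all (mem A) rs &
               {in A, forall y, has (fun r => connect (induced e A) r y) rs}].
Proof.
have sym_A := sym_connect_sym (induced_sym A).
exists (enum (predI (roots (induced e A)) A)); split.
- by rewrite -cardE.
- by apply/allP => r; rewrite mem_enum => /andP[].
move=> y y_A; apply/hasP; exists (root (induced e A) y).
  rewrite mem_enum inE (roots_root sym_A).
  by case: (connect_induced_mem (connect_root (induced e A) y)) => [->|].
by rewrite sym_A connect_root.
Qed.

Lemma K2n_minor_of_blocks n x (C : {set T}) (bs : seq (seq T)) :
  connected_set e C -> x \notin C -> size bs = n -> uniq (flatten bs) ->
  {in bs, forall b, [/\ sorted e b, has (e x) b, [exists y in C, has (e y) b],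
                       x \notin b & [disjoint C & b]]} ->
  has_K2n_minor e n.
Proof.
move=> conn_C xNC size_bs uniq_bs blocks_bs.
have bs_i (i : 'I_n) : nth [::] bs i \in bs by rewrite mem_nth ?size_bs.
exists [set x], C, (fun i => [set z | z \in nth [::] bs i]).
split; [split|split; [split|]] => //.
- exact: connected_set1.
- move=> i; have [sorted_b x_b _ _ _] := blocks_bs _ (bs_i i).
  by apply: connected_set_sorted sorted_b; apply: contraTneq x_b => ->.
- by rewrite disjoints1.
- move=> i; have [_ _ _ xNb C_b] := blocks_bs _ (bs_i i).
  split; first by rewrite disjoints1 inE.
  by rewrite (eq_disjoint_r (B := mem (nth [::] bs i))) // => z; rewrite inE.
- move=> i j ne_ij; rewrite disjoint_subset; apply/subsetP => z; rewrite !inE.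
  by apply: disjoint_nth_flatten; rewrite ?size_bs.
- move=> i; have [_ /hasP[z z_b exz] C_b _ _] := blocks_bs _ (bs_i i).
  have /exists_inP[y y_C /hasP[z' z'_b eyz']] := C_b.
  by split; [exists x, z | exists y, z']; rewrite !inE ?eqxx.
Qed.

End InducedSubgraphs.

Lemma induced_path_sorted (T : finType) (e : rel T) P : induced_path e P -> sorted e P.
Proof.
case: P => [[]//|a p [_ _ adj]]; apply/(pathP a) => i lt_i.
by have := adj a i i.+1 (ltnW lt_i) lt_i; rewrite eqxx orbT.
Qed.

Definition outside (T : finType) (P : seq T) (x : T) : {pred T} :=
  [pred y | (y \notin P) && (y != x)].

Section Reduction.
Variables (T : finType) (e : rel T) (n m : nat) (P : seq T) (x : T).
Hypotheses (sym_e : symmetric e) (n_gt0 : 0 < n) (m_gt0 : 0 < m).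
Hypotheses (xNP : x \notin P) (uniq_P : uniq P) (sorted_P : sorted e P).

Lemma isolated_prefix Q : m <= count (e x) Q ->
  {in outside P x, forall y, ~~ has (e y) Q} ->
  exists Ps, [/\ Ps != [::], infix Ps Q, count (e x) Ps = m &
                {in outside P x, forall y, ~~ has (e y) Ps}].
Proof.
move=> /prefix_with_count[Ps [s' [def_Q count_Ps]]] no_nbr; exists Ps; split=> //.
- by apply: contraTneq m_gt0 => Ps0; rewrite -count_Ps Ps0.
- by rewrite def_Q prefix_infix.
- by move=> y /no_nbr; rewrite def_Q has_cat negb_or => /andP[].
Qed.

Lemma isolated_subpath_or_K2n_minor rs Q :
  all (mem (outside P x)) rs -> infix Q P -> m * n ^ size rs <= count (e x) Q ->
  {in outside P x, forall y, has (e y) Q ->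
     has (fun r => connect (induced e (outside P x)) r y) rs} ->
  has_K2n_minor e n \/
  exists Ps, [/\ Ps != [::], infix Ps Q, count (e x) Ps = m &
                {in outside P x, forall y, ~~ has (e y) Ps}].
Proof.
elim: rs Q => [|r rs IHrs] Q /=.
  move=> _ _; rewrite muln1 => le_m no_nbr; right; apply: isolated_prefix le_m _.
  by move=> y y_O; apply/negP => /(no_nbr y y_O).
move=> /andP[r_O rs_O] QP.
rewrite expnS mulnCA => /split_count_blocks[bs [s' [size_bs def_Q count_bs]]] nbr_Q.
have bs_Q b : b \in bs -> infix b Q.
  by rewrite def_Q => b_bs; apply/infix_catr/infix_flatten.
have bs_P b : b \in bs -> {subset b <= P}.
  by move=> b_bs z z_b; apply: (mem_infix QP); apply: (mem_infix (bs_Q b b_bs)).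
have count_b b : b \in bs -> count (e x) b = m * n ^ size rs.
  by move/(allP count_bs)/eqP.
pose C := component e (outside P x) r.
have [touch_all | /allPn[b b_bs b_far]] :=
  boolP (all (fun b => [exists y in C, has (e y) b]) bs).
  left; apply: (K2n_minor_of_blocks sym_e (x := x) (C := C) _ _ size_bs).
  - exact: connected_set_component.
  - by rewrite /C /component !inE eqxx !andbF.
  - by move: (infix_uniq QP uniq_P); rewrite def_Q cat_uniq => /andP[].
  move=> b b_bs; split.
  - exact: infix_sorted (infix_trans (bs_Q b b_bs) QP) sorted_P.
  - by rewrite has_count count_b // muln_gt0 m_gt0 expn_gt0 n_gt0.
  - exact: (allP touch_all).
  - by apply: contra xNP; apply: bs_P.
  - rewrite disjoint_subset; apply/subsetP => z; rewrite !inE /= => /andP[/andP[zNP _] _].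
    by apply: contra zNP; apply: bs_P.
have nbr_b : {in outside P x, forall y, has (e y) b ->
                 has (fun r => connect (induced e (outside P x)) r y) rs}.
  move=> y y_O nbr_b; have /(nbr_Q y y_O)/orP[r_y|//] : has (e y) Q.
    by case/hasP: nbr_b => z /(mem_infix (bs_Q b b_bs)) z_Q eyz; apply/hasP; exists z.
  by case/negP: b_far; apply/exists_inP; exists y; rewrite // inE y_O.
have [|minor|[Ps [Ps_n0 Ps_b count_Ps Ps_isolated]]] :=
  IHrs b rs_O (infix_trans (bs_Q b b_bs) QP) _ nbr_b.
- by rewrite count_b.
- by left.
by right; exists Ps; split=> //; apply: infix_trans Ps_b (bs_Q b b_bs).
Qed.

End Reduction.

Theorem mainTheorem10 (T : finType) (e : rel T) (n m t : nat) (P : seq T) (x : T) :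
  simple_graph e -> 0 < n -> 0 < m ->
  induced_path e P -> x \notin P ->
  ncomp_outside e P x = t ->
  (m + 2) * n ^ t <= count (e x) P ->
  has_K2n_minor e n \/
  exists Ps : seq T,
    [/\ Ps != [::], infix Ps P, count (e x) Ps = m &
        forall y, y \notin P -> y != x -> forall z, z \in Ps -> ~~ e y z].
Proof.
move=> [sym_e _] n_gt0 m_gt0 path_P xNP <- many_nbrs.
have [_ uniq_P _] := path_P.
have [rs [size_rs rs_O rs_cover]] := component_representatives sym_e (outside P x).
have [|minor|[Ps [Ps_n0 Ps_P count_Ps Ps_isolated]]] :=
  isolated_subpath_or_K2n_minor sym_e n_gt0 m_gt0 xNP uniq_P (induced_path_sorted path_P)
    rs_O (infix_refl P) _ (fun y y_O _ => rs_cover y y_O).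
- by apply: leq_trans many_nbrs; rewrite size_rs leq_mul2r leq_addr orbT.
- by left.
right; exists Ps; split=> // y yNP y_x z z_Ps.
have y_O : y \in outside P x by rewrite inE /= yNP.
by apply: contra (Ps_isolated y y_O) => eyz; apply/hasP; exists z.
Qed.
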